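(* Let $n\ge4$, let $V$ be an inner product space over $\mathbb{K}\in\{\mathbb{R},\mathbb{C}\}$, let $x_1,\dots,x_n\in V$, and set $x_{n+1}=x_1$. For $1\le i<j\le n$ let $$c_{ij}=\sum_{r=0}^{2}(-1)^{r+1}\binom{n-j+i-1}{2-r}\binom{j-i-1}{r}.$$ Then $$\binom{n-2}{2}\sum_{i=1}^n\|x_i-x_{i+1}\|^2=\sum_{\substack{1\le i<j\le n\\ 1<j-i<n-1}}c_{ij}\|x_i-x_j\|^2+\sum_{1\le i<j<k<l\le n}\|x_i-x_j+x_k-x_l\|^2.$$
   Context: $\|v\|=\sqrt{(v,v)}$ denotes the norm induced by the inner product of $V$. Binomial coefficients $\binom{a}{b}$ are $0$ when $b>a$ or $b<0$. *)

From HB Require Import structures.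
From mathcomp Require Import all_boot all_order all_algebra.
From mathcomp Require Import reals.
From mathcomp Require Import complex.
Set Implicit Arguments. Unset Strict Implicit. Unset Printing Implicit Defensive.
Import Order.TTheory GRing.Theory Num.Theory.
Local Open Scope ring_scope.

(* Scalar field K in {R, C}: K = R (b = false) or K = R[i] (b = true), R : realType. *)
Definition Kfield (R : realType) (b : bool) : numFieldType :=
  if b then Num.NumField.clone (complex R) _ else Num.NumField.clone R _.

Definition sconj (R : realType) (b : bool) : Kfield R b -> Kfield R b :=
  match b as b return Kfield R b -> Kfield R b with
  | true => fun z : complex R => (z^*)%C
  | false => fun z : R => z
  end.

Definition sre (R : realType) (b : bool) : Kfield R b -> R :=
  match b as b return Kfield R b -> R with
  | true => fun z : complex R => complex.Re z
  | false => fun z : R => z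
  end.

Record is_inner_product (R : realType) (b : bool) (V : lmodType (Kfield R b))
    (ip : V -> V -> Kfield R b) : Prop := {
  ip_linear : forall (a : Kfield R b) (x y z : V), ip (a *: x + y) z = a * ip x z + ip y z;
  ip_conj_sym : forall x y : V, ip y x = sconj (ip x y);
  ip_pos : forall x : V, x != 0 -> 0 < ip x x
}.

(* induced norm ||v|| = sqrt((v,v)) (the value (v,v) is real) *)
Definition ipnorm (R : realType) (b : bool) (V : lmodType (Kfield R b))
    (ip : V -> V -> Kfield R b) (v : V) : R := Num.sqrt (sre (ip v v)).

Definition cij (R : realType) (n i j : nat) : R :=
  \sum_(r < 3) (-1) ^+ r.+1 * ('C(n - j + i - 1, 2 - r))%:R * ('C(j - i - 1, r))%:R.

From HB Require Import structures.
From mathcomp Require Import all_boot all_order all_algebra.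
From mathcomp Require Import reals.
From mathcomp Require Import complex.
From mathcomp Require Import ring zify.
Import Order.TTheory GRing.Theory Num.Theory.
Local Open Scope ring_scope.
Set Implicit Arguments. Unset Strict Implicit.

(* Expanding the inner products, every square ||x_i - x_j + x_k - x_l||^2 is
   the signed combination  d_ij + d_kl + d_il + d_jk - d_ik - d_jl  of squared
   distances d_ab = ||x_a - x_b||^2.  Summing over i < j < k < l, a pair a < b
   occurs in each of the six roles for a number of quadruples that is a product
   of binomial coefficients in the gaps a - 1, b - a - 1, n - b; the resulting
   total weight of d_ab is exactly -c_ab, except for the n cyclically adjacent
   pairs, whose weight is C(n-2, 2) and which are excluded from the c-sum. *)

Section RealPartOfInnerProduct.
Variable R : realType.

Lemma sreD (b : bool) (z w : Kfield R b) : sre (z + w) = sre z + sre w.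
Proof. by case: b z w => [[? ?] [? ?]|z w]. Qed.

Lemma sreN (b : bool) (z : Kfield R b) : sre (- z) = - sre z.
Proof. by case: b z => [[? ?]|z]. Qed.

Lemma sre0 (b : bool) : sre (0 : Kfield R b) = 0.
Proof. by case: b. Qed.

Lemma sre_sconj (b : bool) (z : Kfield R b) : sre (sconj z) = sre z.
Proof. by case: b z => [[? ?]|z]. Qed.

Lemma sre_ge0 (b : bool) (z : Kfield R b) : 0 <= z -> 0 <= sre z.
Proof. by case: b z => [z|z] //=; rewrite lecE => /andP[]. Qed.

Variables (b : bool) (V : lmodType (Kfield R b)) (ip : V -> V -> Kfield R b).
Hypothesis ip_inner : is_inner_product ip.

Lemma ipDl u v w : ip (u + v) w = ip u w + ip v w.
Proof. by have := ip_linear ip_inner 1 u v w; rewrite scale1r mul1r. Qed.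

Lemma ip0l w : ip 0 w = 0.
Proof. by apply: (addrI (ip 0 w)); rewrite -ipDl !addr0. Qed.

Lemma ipNl u w : ip (- u) w = - ip u w.
Proof.
have := ip_linear ip_inner (-1) u 0 w.
by rewrite addr0 ip0l addr0 scaleN1r mulN1r.
Qed.

Definition reip u v := sre (ip u v).

Lemma reipC u v : reip u v = reip v u.
Proof. by rewrite /reip (ip_conj_sym ip_inner u v) sre_sconj. Qed.

Lemma reipDl u v w : reip (u + v) w = reip u w + reip v w.
Proof. by rewrite /reip ipDl sreD. Qed.

Lemma reipNl u w : reip (- u) w = - reip u w.
Proof. by rewrite /reip ipNl sreN. Qed.

Lemma reipDr u v w : reip w (u + v) = reip w u + reip w v.
Proof. by rewrite reipC reipDl !(reipC w). Qed.

Lemma reipNr u w : reip w (- u) = - reip w u.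
Proof. by rewrite reipC reipNl reipC. Qed.

Lemma ipnorm_sqr v : ipnorm ip v ^+ 2 = reip v v.
Proof.
rewrite /ipnorm sqr_sqrtr //.
have [->|v_neq0] := eqVneq v 0; first by rewrite /reip ip0l sre0.
exact/sre_ge0/ltW/(ip_pos ip_inner).
Qed.

Definition dist2 u v := ipnorm ip (u - v) ^+ 2.

Lemma dist2C u v : dist2 u v = dist2 v u.
Proof. by rewrite /dist2 !ipnorm_sqr !(reipDl, reipDr, reipNl, reipNr); ring. Qed.

Lemma ipnorm_alt4_sqr a b' c d :
  ipnorm ip (a - b' + c - d) ^+ 2
  = dist2 a b' + dist2 c d + dist2 a d + dist2 b' c - dist2 a c - dist2 b' d.
Proof. by rewrite /dist2 !ipnorm_sqr !(reipDl, reipDr, reipNl, reipNr); ring. Qed.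

End RealPartOfInnerProduct.

Section CountingQuadruples.
Variable R : realType.

Definition sum_pairs (w : nat -> nat -> R) N :=
  \sum_(1 <= a < N) \sum_(a.+1 <= b < N) w a b.

Definition sum_quadruples (h : nat -> nat -> nat -> nat -> R) N :=
  \sum_(1 <= i < N) \sum_(i.+1 <= j < N) \sum_(j.+1 <= k < N)
    \sum_(k.+1 <= l < N) h i j k l.

Lemma sum_pairsD (f g : nat -> nat -> R) N :
  sum_pairs (fun a b => f a b + g a b) N = sum_pairs f N + sum_pairs g N.
Proof. by rewrite /sum_pairs -big_split; apply: eq_bigr => a _; rewrite big_split. Qed.

Lemma eq_sum_pairs (f g : nat -> nat -> R) N :
  (forall a b, (1 <= a)%N -> (a < b)%N -> (b < N)%N -> f a b = g a b) ->
  sum_pairs f N = sum_pairs g N.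
Proof.
move=> fg; apply: eq_big_nat => a /andP[a_ge1 _].
by apply: eq_big_nat => b /andP[a_lt_b b_lt_N]; apply: fg.
Qed.

Lemma sum_quadruplesD (f g : nat -> nat -> nat -> nat -> R) N :
  sum_quadruples (fun i j k l => f i j k l + g i j k l) N
  = sum_quadruples f N + sum_quadruples g N.
Proof.
rewrite /sum_quadruples -big_split; apply: eq_bigr => i _.
rewrite -big_split; apply: eq_bigr => j _.
by rewrite -big_split; apply: eq_bigr => k _; rewrite big_split.
Qed.

Lemma sum_quadruplesB (f g : nat -> nat -> nat -> nat -> R) N :
  sum_quadruples (fun i j k l => f i j k l - g i j k l) N
  = sum_quadruples f N - sum_quadruples g N.
Proof.
rewrite /sum_quadruples -sumrB; apply: eq_bigr => i _.
rewrite -sumrB; apply: eq_bigr => j _.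
by rewrite -sumrB; apply: eq_bigr => k _; rewrite sumrB.
Qed.

Lemma exchange_big_nat_lt (g : nat -> nat -> R) lo N :
  \sum_(lo <= j < N) \sum_(j.+1 <= k < N) g j k
  = \sum_(lo <= k < N) \sum_(lo <= j < k) g j k.
Proof.
elim: N => [|N IHN]; first by rewrite !big_geq.
have [lo_le_N | N_lt_lo] := leqP lo N; last by rewrite !big_geq.
rewrite big_nat_recr //= [in RHS]big_nat_recr //= [X in _ + X]big_geq // addr0.
rewrite -IHN -big_split /=; apply: eq_big_nat => j /andP[_ j_lt_N].
by rewrite big_nat_recr.
Qed.

Lemma sum_const_natr a N (c : R) : \sum_(a <= l < N) c = (N - a)%:R * c.
Proof. by rewrite sumr_const_nat mulr_natl. Qed.

Lemma sum_gap_bin2 lo hi :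
  \sum_(lo <= k < hi) ((hi - k.+1)%:R : R) = ('C(hi - lo, 2))%:R.
Proof.
move: {2}(hi - lo)%N (erefl (hi - lo)%N) => d; elim: d lo => [|d IHd] lo hi_lo.
  by rewrite big_geq ?hi_lo //; lia.
rewrite big_ltn; last lia.
rewrite IHd; last lia.
have -> : (hi - lo.+1 = d)%N by lia.
by rewrite hi_lo binS bin1 natrD addrC.
Qed.

Variable F : nat -> nat -> R.

Lemma sum_quadruples12 N :
  sum_quadruples (fun i j k l => F i j) N
  = sum_pairs (fun a b => ('C(N - b.+1, 2))%:R * F a b) N.
Proof.
apply: eq_bigr => i _; apply: eq_bigr => j _.
under eq_bigr => k _ do rewrite sum_const_natr.
by rewrite -mulr_suml sum_gap_bin2.
Qed.

Lemma sum_quadruples34 N :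
  sum_quadruples (fun i j k l => F k l) N
  = sum_pairs (fun a b => ('C(a - 1, 2))%:R * F a b) N.
Proof.
rewrite /sum_quadruples; under eq_bigr => i _ do rewrite exchange_big_nat_lt.
rewrite exchange_big_nat_lt; apply: eq_bigr => k _.
under eq_bigr => i _ do rewrite sum_const_natr.
by rewrite -mulr_suml sum_gap_bin2 mulr_sumr.
Qed.

Lemma sum_quadruples14 N :
  sum_quadruples (fun i j k l => F i l) N
  = sum_pairs (fun a b => ('C(b - a.+1, 2))%:R * F a b) N.
Proof.
apply: eq_bigr => i _; under eq_bigr => j _ do rewrite exchange_big_nat_lt.
rewrite exchange_big_nat_lt; apply: eq_bigr => l _.
under eq_bigr => j _ do rewrite sum_const_natr.
by rewrite -mulr_suml sum_gap_bin2.
Qed.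

Lemma sum_quadruples23 N :
  sum_quadruples (fun i j k l => F j k) N
  = sum_pairs (fun a b => ((a - 1) * (N - b.+1))%:R * F a b) N.
Proof.
rewrite /sum_quadruples.
under eq_bigr => i _ do under eq_bigr => j _ do under eq_bigr => k _
  do rewrite sum_const_natr.
rewrite exchange_big_nat_lt; apply: eq_bigr => j _.
rewrite sum_const_natr mulr_sumr; apply: eq_bigr => k _.
by rewrite natrM mulrA.
Qed.

Lemma sum_quadruples13 N :
  sum_quadruples (fun i j k l => F i k) N
  = sum_pairs (fun a b => ((b - a.+1) * (N - b.+1))%:R * F a b) N.
Proof.
apply: eq_bigr => i _.
under eq_bigr => j _ do under eq_bigr => k _ do rewrite sum_const_natr.
rewrite exchange_big_nat_lt; apply: eq_bigr => k _.
by rewrite sum_const_natr natrM mulrA.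
Qed.

Lemma sum_quadruples24 N :
  sum_quadruples (fun i j k l => F j l) N
  = sum_pairs (fun a b => ((a - 1) * (b - a.+1))%:R * F a b) N.
Proof.
rewrite /sum_quadruples.
under eq_bigr => i _ do under eq_bigr => j _ do rewrite exchange_big_nat_lt.
under eq_bigr => i _ do under eq_bigr => j _ do under eq_bigr => l _
  do rewrite sum_const_natr.
rewrite exchange_big_nat_lt; apply: eq_bigr => j _.
rewrite sum_const_natr mulr_sumr; apply: eq_bigr => k _.
by rewrite natrM mulrA.
Qed.

(* The six terms count the quadruples i < j < k < l in [1, N) with
   (a, b) = (i, j), (k, l), (i, l), (j, k), (i, k), (j, l) respectively. *)
Definition pair_weight N a b : R :=
  ('C(N - b.+1, 2))%:R + ('C(a - 1, 2))%:R + ('C(b - a.+1, 2))%:R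
  + ((a - 1) * (N - b.+1))%:R - ((b - a.+1) * (N - b.+1))%:R
  - ((a - 1) * (b - a.+1))%:R.

Lemma sum_quadruples_alt4 N :
  sum_quadruples
    (fun i j k l => F i j + F k l + F i l + F j k - F i k - F j l) N
  = sum_pairs (fun a b => pair_weight N a b * F a b) N.
Proof.
rewrite !(sum_quadruplesB, sum_quadruplesD).
rewrite sum_quadruples12 sum_quadruples34 sum_quadruples14 sum_quadruples23.
rewrite sum_quadruples13 sum_quadruples24 -!sum_pairsD.
rewrite /sum_pairs -!sumrB; apply: eq_bigr => a _.
by rewrite -!sumrB; apply: eq_bigr => b _; rewrite /pair_weight; ring.
Qed.

End CountingQuadruples.

Section Coefficients.
Variable R : realType.

Definition cyclic_adjacent n a b := (b == a.+1) || (a == 1%N) && (b == n).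

Lemma natr_bin2 m : ('C(m, 2))%:R = m%:R * (m%:R - 1) / 2 :> R.
Proof.
elim: m => [|m IHm]; first by rewrite !mul0r.
by rewrite binS bin1 natrD IHm -addn1 natrD; field.
Qed.

Lemma cij_pair_weight n a b : (1 <= a)%N -> (a < b)%N -> (b <= n)%N ->
  cij R n a b + pair_weight R n.+1 a b = 0.
Proof.
move=> a_ge1 a_lt_b b_le_n.
rewrite /cij /pair_weight !big_ord_recr big_ord0 /=.
have -> : (n - b + a - 1 = (a - 1) + (n - b))%N by lia.
have -> : (b - a - 1 = b - a.+1)%N by lia.
have -> : (n.+1 - b.+1 = n - b)%N by lia.
by rewrite subn0 subnn !bin0 !bin1 !natr_bin2 !natrM !natrD; field.
Qed.

Lemma cij_cyclic_adjacent n a b : (1 <= a)%N -> (a < b)%N -> (b <= n)%N ->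
  cyclic_adjacent n a b -> cij R n a b = - ('C(n - 2, 2))%:R.
Proof.
move=> a_ge1 a_lt_b b_le_n /orP[/eqP-> | /andP[/eqP-> /eqP->]];
  rewrite /cij !big_ord_recr big_ord0 /= subn0 subnn.
- have -> : (n - a.+1 + a - 1 = n - 2)%N by lia.
  by rewrite subSnn subnn !bin0n bin0 /=; ring.
- have -> : (n - 1 - 1 = n - 2)%N by lia.
  by rewrite add0n subnn !bin0n bin0 /=; ring.
Qed.

Lemma total_pair_weight n a b :
  (4 <= n)%N -> (1 <= a)%N -> (a < b)%N -> (b <= n)%N ->
  (if (1 < b - a < n - 1)%N then cij R n a b else 0) + pair_weight R n.+1 a b
  = if cyclic_adjacent n a b then ('C(n - 2, 2))%:R else 0.
Proof.
move=> n_ge4 a_ge1 a_lt_b b_le_n.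
have -> : pair_weight R n.+1 a b = - cij R n a b.
  by apply/eqP; rewrite -addr_eq0 addrC cij_pair_weight.
have [far | near] := boolP (1 < b - a < n - 1)%N.
  have -> : cyclic_adjacent n a b = false.
    by apply/negbTE/negP => /orP[/eqP | /andP[/eqP /eqP]]; move: far; lia.
  by rewrite subrr.
have adj : cyclic_adjacent n a b.
  rewrite /cyclic_adjacent; case: eqP => //= b_ne.
  by apply/andP; split; apply/eqP; move: b_ne near; lia.
by rewrite adj add0r cij_cyclic_adjacent ?opprK.
Qed.

Lemma sum_pairs_cyclic_adjacent (F : nat -> nat -> R) (c : R) n : (2 < n)%N ->
  sum_pairs (fun a b => (if cyclic_adjacent n a b then c else 0) * F a b) n.+1
  = c * (\sum_(1 <= a < n) F a a.+1 + F 1%N n).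
Proof.
move=> n_gt2; rewrite /sum_pairs big_nat_recr /=; last lia.
rewrite [X in _ + X]big_geq // addr0.
rewrite (eq_big_nat _ _ (F2 := fun a =>
  c * F a a.+1 + (if a == 1%N then c * F 1%N n else 0))); last first.
  move=> a /andP[a_ge1 a_lt_n].
  rewrite big_ltn; last lia.
  rewrite /cyclic_adjacent eqxx /=; congr (_ + _).
  have [-> | a_ne1] := eqVneq a 1%N.
    rewrite big_nat_recr /=; last lia.
    rewrite eqxx orbT big_nat_cond big1 ?add0r // => b' /andP[/andP[b'_gt2 b'_lt_n] _].
    by rewrite !ifN ?mul0r //; apply/negP => /orP[/eqP | /eqP]; lia.
  rewrite big_nat_cond big1 // => b' /andP[/andP[b'_gt _] _].
  by rewrite andFb orbF ifN ?mul0r // neq_ltn b'_gt orbT.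
rewrite big_split /= mulrDr -mulr_sumr; congr (_ + _).
rewrite big_ltn; last lia.
rewrite eqxx big_nat_cond big1 ?addr0 // => a /andP[/andP[a_gt1 _] _].
by rewrite ifN //; apply/negP => /eqP; lia.
Qed.

End Coefficients.

Theorem theorem3p2 (R : realType) (b : bool) (V : lmodType (Kfield R b))
    (ip : V -> V -> Kfield R b) (Hip : is_inner_product ip)
    (n : nat) (Hn : (4 <= n)%N) (x : nat -> V) :
  let xx i := if i == n.+1 then x 1%N else x i in
  ('C(n - 2, 2))%:R * \sum_(1 <= i < n.+1) ipnorm ip (xx i - xx i.+1) ^+ 2
  = \sum_(1 <= i < n.+1) \sum_(i.+1 <= j < n.+1 | (1 < j - i < n - 1)%N)
        cij R n i j * ipnorm ip (x i - x j) ^+ 2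
    + \sum_(1 <= i < n.+1) \sum_(i.+1 <= j < n.+1) \sum_(j.+1 <= k < n.+1)
        \sum_(k.+1 <= l < n.+1) ipnorm ip (x i - x j + x k - x l) ^+ 2.
Proof.
move=> xx; pose d a b := dist2 ip (x a) (x b).
have -> : \sum_(1 <= i < n.+1) \sum_(i.+1 <= j < n.+1) \sum_(j.+1 <= k < n.+1)
    \sum_(k.+1 <= l < n.+1) ipnorm ip (x i - x j + x k - x l) ^+ 2
  = sum_pairs (fun a b => pair_weight R n.+1 a b * d a b) n.+1.
  rewrite -sum_quadruples_alt4; do 4!apply: eq_bigr => ? _.
  exact: ipnorm_alt4_sqr.
have -> : \sum_(1 <= i < n.+1) \sum_(i.+1 <= j < n.+1 | (1 < j - i < n - 1)%N)
    cij R n i j * ipnorm ip (x i - x j) ^+ 2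
  = sum_pairs (fun a b => (if (1 < b - a < n - 1)%N then cij R n a b else 0)
                          * d a b) n.+1.
  apply: eq_bigr => i _; rewrite big_mkcond; apply: eq_bigr => j _.
  by case: ifP; rewrite ?mul0r.
rewrite -sum_pairsD (eq_sum_pairs (g := fun a c =>
  (if cyclic_adjacent n a c then 'C(n - 2, 2)%:R else 0) * d a c)); last first.
  by move=> a c a_ge1 a_lt_c c_le_n; rewrite -mulrDl total_pair_weight.
rewrite sum_pairs_cyclic_adjacent; last lia.
rewrite big_nat_recr /=; last lia.
rewrite /xx eqxx ifN; last by rewrite neq_ltn ltnSn.
congr (_ * (_ + _)); last exact: dist2C.
apply: eq_big_nat => i /andP[_ i_lt_n].
by have [/negbTE-> /negbTE->] : i != n.+1 /\ i.+1 != n.+1 by split; apply/eqP; lia.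
Qed.
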